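(* There is an absolute constant $c>0$ such that for every $n\ge1$, every $\eta\in[n]=\{1,\dots,n\}$, and every comparison-based search algorithm (deterministic or randomized) which, given a predicted distribution $\hat p$ on $[n]$ and a target key $a\in\{a_1,\dots,a_n\}$ (with $a_1<\dots<a_n$), locates the index of $a$ using comparisons, there exists an instance $(p,\hat p)$ of distributions on $[n]$ with $H(p)=0$ and earth mover's distance between $p$ and $\hat p$ at most $\eta$ on which the algorithm's expected number of comparisons (over $a=a_i$ with probability $p_i$ and over its internal randomness) is at least $c\log\eta$.
   Context: All logarithms are base 2. $H(p)=-\sum_i p_i\log p_i$ is the entropy. The earth mover's distance between distributions $P,Q$ on $[n]$ is $\inf_{\gamma\in\Pi(P,Q)}\mathbb{E}_{(x,y)\sim\gamma}|x-y|$, with $\Pi(P,Q)$ the set of couplings of $P$ and $Q$. A comparison of the target $a$ with a key $a_j$ returns whether $a<a_j$, $a=a_j$ or $a>a_j$ and counts as one query. *)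

From HB Require Import structures.
From mathcomp Require Import all_boot all_order all_algebra.
From mathcomp Require Import all_classical all_reals.
From mathcomp Require Import ereal topology normedtype sequences exp.
From mathcomp Require Import Rstruct.
Set Implicit Arguments. Unset Strict Implicit. Unset Printing Implicit Defensive.
Import Order.TTheory GRing.Theory Num.Theory.
Local Open Scope classical_set_scope.
Local Open Scope ring_scope.

Section Defs.
Variable R : realType.

(* a probability distribution on [n], indexed by 'I_n = {0,...,n-1} *)
Definition is_dist (n : nat) (p : 'I_n -> R) : Prop :=
  (forall i, 0 <= p i) /\ \sum_(i < n) p i = 1.

Definition log2 (x : R) : R := ln x / ln 2.

Definition entropy (n : nat) (p : 'I_n -> R) : R :=
  - \sum_(i < n) (if p i == 0 then 0 else p i * log2 (p i)).

Definition is_coupling (n : nat) (p q : 'I_n -> R) (g : 'I_n -> 'I_n -> R) : Prop :=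
  (forall i j, 0 <= g i j) /\
  (forall i, \sum_(j < n) g i j = p i) /\
  (forall j, \sum_(i < n) g i j = q j).

Definition coupling_cost (n : nat) (g : 'I_n -> 'I_n -> R) : R :=
  \sum_(i < n) \sum_(j < n) g i j * `|(i : nat)%:R - (j : nat)%:R|.

Definition emd (n : nat) (p q : 'I_n -> R) : R :=
  inf [set x | exists g, is_coupling p q g /\ x = coupling_cost g].

End Defs.

(* Deterministic comparison-based search: a ternary comparison tree.
   A node CNode j tl te tg compares the target a with key a_j and continues in
   tl / te / tg according to a < a_j, a = a_j, a > a_j. *)
Inductive ctree (n : nat) : Type :=
| CLeaf of 'I_n
| CNode of 'I_n & ctree n & ctree n & ctree n.

(* Running a tree on target a = a_i (keys sorted: a_i < a_j iff i < j).
   Returns the output index and the number of comparisons made. *)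
Fixpoint run (n : nat) (t : ctree n) (i : 'I_n) : 'I_n * nat :=
  match t with
  | CLeaf k => (k, 0%N)
  | CNode j tl te tg =>
      let r := run (if (i < j)%N then tl else if i == j then te else tg) i in
      (r.1, r.2.+1)
  end.

Definition correct (n : nat) (t : ctree n) : Prop := forall i, (run t i).1 = i.

Definition ncomp (n : nat) (t : ctree n) (i : 'I_n) : nat := (run t i).2.

Section Rand.
Variable R : realType.
Local Open Scope ring_scope.

(* A randomized (correct) search algorithm for a fixed input prediction:
   a probability distribution over (the countable set of) correct
   deterministic comparison trees. Deterministic = point mass. *)
Record randalg (n : nat) := RandAlg {
  ra_w : nat -> R;
  ra_t : nat -> ctree n;
  ra_w_ge0 : forall k, 0 <= ra_w k;
  ra_w_sum : (\sum_(k <oo) (ra_w k)%:E = 1)%E;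
  ra_correct : forall k, correct (ra_t k)
}.

Definition expected_cost (n : nat) (A : randalg n) (p : 'I_n -> R) : \bar R :=
  (\sum_(k <oo) (ra_w A k * \sum_(i < n) p i * (ncomp (ra_t A k) i)%:R)%:E)%E.
End Rand.

From HB Require Import structures.
From mathcomp Require Import all_boot all_order all_algebra.
From mathcomp Require Import all_classical all_reals.
From mathcomp Require Import ereal topology normedtype sequences exp.
From mathcomp Require Import Rstruct.
From mathcomp.zify Require Import zify.
From mathcomp.algebra_tactics Require Import lra.
Import Order.TTheory GRing.Theory Num.Theory.
Set Implicit Arguments. Unset Strict Implicit.

(* A ternary comparison tree answers at most [3 ^ m] targets correctly within
   [m] comparisons, so on any [eta] targets a correct tree spends at least
   [(m + 1) (eta - 3 ^ m)] comparisons in total; with [9 ^ m <= eta] this is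
   of order [eta log eta].  Fix the prediction to be a point mass at the first
   key (at distance [< eta] from each of the first [eta] keys) and average over
   the point-mass targets [a_1, ..., a_eta]: some target of zero entropy costs
   the algorithm [Omega (log eta)] comparisons in expectation. *)

Lemma card_predU_leq (T : finType) (A B : {pred T}) :
  #|[predU A & B]| <= #|A| + #|B|.
Proof. by rewrite -cardUI leq_addr. Qed.

Section ComparisonTrees.
Variable n : nat.

Lemma card_resolved_leq (t : ctree n) m :
  #|[pred i | ((run t i).1 == i) && (ncomp t i <= m)]| <= 3 ^ m.
Proof.
elim: t m => [k|j tl IHl te IHe tg IHg] m.
  apply: leq_trans (_ : #|pred1 k| <= _); last by rewrite card1 expn_gt0.
  apply: subset_leq_card; apply/fintype.subsetP => i; rewrite !inE /ncomp /=.
  by case/andP => /eqP ->.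
case: m => [|m].
  rewrite (@eq_card _ _ pred0) ?card0 // => i.
  by rewrite !inE /ncomp /= ltn0 andbF.
set Pl := [pred i | ((run tl i).1 == i) && (ncomp tl i <= m)].
set Pe := [pred i | ((run te i).1 == i) && (ncomp te i <= m)].
set Pg := [pred i | ((run tg i).1 == i) && (ncomp tg i <= m)].
apply: leq_trans (_ : #|[predU Pl & [predU Pe & Pg]]| <= _).
  apply: subset_leq_card; apply/fintype.subsetP => i; rewrite !inE /ncomp /= ltnS.
  by case: ifP => _; [|case: ifP => _] => ->; rewrite ?orbT.
apply: leq_trans (card_predU_leq _ _) _.
rewrite expnS !mulSn mul0n addn0 leq_add ?IHl //.
by apply: leq_trans (card_predU_leq _ _) _; rewrite leq_add ?IHe ?IHg.
Qed.

Lemma card_ncomp_leq (t : ctree n) m :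
  correct t -> #|[pred i | ncomp t i <= m]| <= 3 ^ m.
Proof.
move=> ct; apply: leq_trans (card_resolved_leq t m); apply: subset_leq_card.
by apply/fintype.subsetP => i; rewrite !inE ct eqxx.
Qed.

Lemma sum_ncomp_geq (t : ctree n) (A : {pred 'I_n}) m : correct t ->
  m.+1 * (#|A| - 3 ^ m) <= \sum_(i in A) ncomp t i.
Proof.
move=> ct; set B := [pred i | ncomp t i <= m].
have cardAB : #|A| - 3 ^ m <= #|[predD A & B]|.
  rewrite leq_subLR -(cardID B A) leq_add2r.
  apply: leq_trans (card_ncomp_leq m ct); apply: subset_leq_card.
  by apply/fintype.subsetP => i; rewrite !inE => /andP[].
apply: leq_trans (leq_mul (leqnn m.+1) cardAB) _.
rewrite mulnC -sum_nat_const [X in _ <= X](bigID B) /= addnC.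
apply: leq_trans (leq_addr _ _).
rewrite big_mkcond [X in _ <= X]big_mkcond leq_sum // => i _.
by rewrite !inE andbC; case: (i \in A); case: (leqP (ncomp t i) m).
Qed.

Lemma card_ord_ltn eta : eta <= n -> #|[pred i : 'I_n | i < eta]| = eta.
Proof.
move=> en; rewrite -sum1_card -[RHS]card_ord -sum1_card.
by rewrite (big_ord_widen n (fun _ => 1) en); apply: eq_bigl.
Qed.

End ComparisonTrees.

Local Open Scope ring_scope.

Lemma exists_ge_average (R : realDomainType) (T : finType) (A : {pred T})
    (f : T -> \bar R) (x : R) :
  (0 < #|A|)%N -> (forall i, i \in A -> 0 <= f i)%E ->
  ((#|A|%:R * x)%:E <= \sum_(i in A) f i)%E -> exists2 i, i \in A & (x%:E <= f i)%E.
Proof.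
move=> /card_gt0P[a Aa] f0 hsum; apply: contrapT => hlt.
have f_lt i : i \in A -> (f i < x%:E)%E.
  by move=> Ai; rewrite ltNge; apply/negP => hi; apply: hlt; exists i.
have f_fin i : i \in A -> f i \is a fin_num.
  by move=> Ai; rewrite ge0_fin_numE ?f0 // (lt_trans (f_lt i Ai)) ?ltey.
move: hsum; rewrite (eq_bigr (fun i => (fine (f i))%:E)) => [|i Ai]; last first.
  by rewrite fineK ?f_fin.
rewrite sumEFin lee_fin mulr_natl -sumr_const; apply/negP; rewrite -ltNge.
apply: ltr_sum => [|i Ai]; first by apply/hasP; exists a; rewrite ?mem_index_enum.
by rewrite -lte_fin fineK ?f_lt ?f_fin.
Qed.

Section PointMass.
Context {R : realType} {n : nat}.

Definition point_mass (i : 'I_n) : 'I_n -> R := fun j => (j == i)%:R.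

Lemma sum_point_massM (i : 'I_n) (f : 'I_n -> R) :
  \sum_(j < n) point_mass i j * f j = f i.
Proof.
rewrite (bigD1 i) //= /point_mass eqxx mul1r big1 ?addr0 // => j /negbTE ->.
by rewrite mul0r.
Qed.

Lemma sum_point_mass (i : 'I_n) : \sum_(j < n) point_mass i j = 1.
Proof.
rewrite -[RHS](sum_point_massM i (fun _ => 1)).
by apply: eq_bigr => j _; rewrite mulr1.
Qed.

Lemma is_dist_point_mass (i : 'I_n) : is_dist (point_mass i).
Proof. by split; [move=> j; rewrite ler0n | exact: sum_point_mass]. Qed.

Lemma entropy_point_mass (i : 'I_n) : entropy (point_mass i) = 0.
Proof.
rewrite /entropy big1 ?oppr0 // => j _; rewrite /point_mass.
by case: (j == i); rewrite ?eqxx // oner_eq0 mul1r /log2 ln1 mul0r.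
Qed.

Lemma emd_point_mass_le (i i0 : 'I_n) :
  emd (point_mass i) (point_mass i0) <= `|(i : nat)%:R - (i0 : nat)%:R|.
Proof.
have lb : has_lbound [set x | exists g, is_coupling (point_mass i) (point_mass i0) g
                                          /\ x = coupling_cost g].
  exists 0 => _ [g [[g0 _] ->]].
  by apply: sumr_ge0 => a _; apply: sumr_ge0 => b _; apply: mulr_ge0.
pose g (a b : 'I_n) : R := point_mass i a * point_mass i0 b.
apply: (ge_inf lb); exists g; split; first split.
- by move=> a b; rewrite mulr_ge0 ?ler0n.
- split=> a; rewrite /g.
    by rewrite -mulr_sumr sum_point_mass mulr1.
  by rewrite -mulr_suml sum_point_mass mul1r.
- rewrite /coupling_cost -(sum_point_massM i (fun a => `|(a : nat)%:R - (i0 : nat)%:R|)).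
  apply: eq_bigr => a _; rewrite -(sum_point_massM i0 (fun b => `|(a : nat)%:R - (b : nat)%:R|)).
  by rewrite mulr_sumr; apply: eq_bigr => b _; rewrite /g !mulrA.
Qed.

Lemma expected_cost_point_mass (B : randalg R n) (i : 'I_n) :
  expected_cost B (point_mass i) =
  (\sum_(k <oo) (ra_w B k * (ncomp (ra_t B k) i)%:R)%:E)%E.
Proof. by apply: eq_eseriesr => k _; rewrite sum_point_massM. Qed.

Lemma expected_cost_point_mass_ge0 (B : randalg R n) (i : 'I_n) :
  (0 <= expected_cost B (point_mass i))%E.
Proof.
rewrite expected_cost_point_mass; apply: nneseries_ge0 => k _ _.
by rewrite lee_fin mulr_ge0 ?ra_w_ge0.
Qed.

Lemma sum_expected_cost_point_mass_ge (B : randalg R n) (A : {pred 'I_n}) (L : R) :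
  0 <= L -> (forall k, L <= \sum_(i in A) (ncomp (ra_t B k) i)%:R) ->
  (L%:E <= \sum_(i in A) expected_cost B (point_mass i))%E.
Proof.
move=> L0 tree_ge; under eq_bigr => i _ do rewrite expected_cost_point_mass.
rewrite -nneseries_sum; last by move=> i k _; rewrite lee_fin mulr_ge0 ?ra_w_ge0.
rewrite -[X in (X <= _)%E]mule1 -(ra_w_sum B) -nneseriesZl; last first.
  by move=> k _; rewrite lee_fin ra_w_ge0.
apply: lee_nneseries => [k _ _|k _]; first by rewrite -EFinM lee_fin mulr_ge0 ?ra_w_ge0.
by rewrite -EFinM sumEFin lee_fin -mulr_sumr mulrC ler_wpM2l ?ra_w_ge0.
Qed.

End PointMass.

Lemma double_three_expn_leq (eta m : nat) :
  (1 < eta)%N -> (9 ^ m <= eta)%N -> (2 * 3 ^ m <= eta)%N.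
Proof.
case: m => [|m] eta1 le_eta; first by rewrite muln1.
apply: leq_trans le_eta; rewrite (_ : 9 = 3 * 3)%N // expnMn leq_mul2r expnS.
by have := expn_gt0 3 m; lia.
Qed.

Lemma log2_natr_le (R : realType) (x k : nat) :
  (0 < x)%N -> (x <= 2 ^ k)%N -> log2 (x%:R : R) <= k%:R.
Proof.
move=> x0 le_x; have ln2_gt0 : 0 < ln (2 : R) by rewrite ln_gt0 // ltr1n.
rewrite /log2 ler_pdivrMr // mulr_natl -lnXn ?ltr0n // -natrX.
by rewrite ler_ln ?posrE ?ltr0n ?expn_gt0 // ler_nat.
Qed.

Lemma log2_le_ternary_search_cost (R : realType) (eta m : nat) :
  (9 ^ m <= eta < 9 ^ m.+1)%N ->
  log2 (eta%:R : R) / 8 <= (m.+1 * (eta - 3 ^ m))%:R / eta%:R.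
Proof.
move=> /andP[lo hi]; have eta0 : (0 < eta)%N by apply: leq_trans lo; rewrite expn_gt0.
have eta0R : (0 : R) < eta%:R by rewrite ltr0n.
case: (ltnP 1 eta) => [eta2|eta1]; last first.
  have -> : eta = 1%N by apply/eqP; rewrite eqn_leq eta1.
  by rewrite /log2 ln1 !mul0r divr_ge0 ?ler0n.
have half_cost : (m.+1 * eta <= 2 * (m.+1 * (eta - 3 ^ m)))%N.
  have := double_three_expn_leq eta2 lo.
  by rewrite mulnCA leq_mul2l => ?; apply/orP; right; lia.
have log_eta : log2 (eta%:R : R) <= (4 * m.+1)%:R.
  apply: log2_natr_le eta0 _; rewrite expnM.
  by apply: leq_trans (ltnW hi) _; rewrite leq_exp2r.
rewrite ler_pdivlMr // mulrAC ler_pdivrMr //.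
apply: le_trans (_ : (4 * m.+1)%:R * eta%:R <= _).
  by rewrite ler_wpM2r ?ler0n.
by rewrite -!natrM ler_nat; lia.
Qed.

Theorem theorem3p2 :
  exists c : Rdefinitions.R, 0 < c /\
  forall (n eta : nat), (1 <= n)%N -> (1 <= eta <= n)%N ->
  forall A : ('I_n -> Rdefinitions.R) -> randalg Rdefinitions.R n,
  exists (p phat : 'I_n -> Rdefinitions.R),
    [/\ is_dist p, is_dist phat, entropy p = 0,
        emd p phat <= eta%:R
      & ((c * log2 eta%:R)%:E <= expected_cost (A phat) p)%E].
Proof.
exists (1 / 8); split=> [|n eta n1 /andP[eta1 eta_n] A]; first by lra.
pose i0 : 'I_n := Ordinal n1.
pose S := [pred i : 'I_n | (i < eta)%N].
pose m := trunc_log 9 eta.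
pose cost : Rdefinitions.R := (m.+1 * (eta - 3 ^ m))%:R.
have cardS : #|S| = eta := card_ord_ltn eta_n.
have cost_S : (cost%:E <= \sum_(i in S) expected_cost (A (point_mass i0)) (point_mass i))%E.
  apply: sum_expected_cost_point_mass_ge => [|k]; first exact: ler0n.
  by rewrite /cost -natr_sum ler_nat -cardS; apply: sum_ncomp_geq; apply: ra_correct.
have [i Si cost_i] : exists2 i, i \in S &
    ((cost / eta%:R)%:E <= expected_cost (A (point_mass i0)) (point_mass i))%E.
  apply: exists_ge_average => [|i _|]; rewrite ?cardS //.
    exact: expected_cost_point_mass_ge0.
  by rewrite mulrC divfK ?pnatr_eq0 -?lt0n.
exists (point_mass i), (point_mass i0); split.
- exact: is_dist_point_mass.
- exact: is_dist_point_mass.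
- exact: entropy_point_mass.
- apply: le_trans (emd_point_mass_le i i0) _.
  (* reduce [i0] to [0] first, lest [subr0] compute with the reals *)
  by rewrite [(i0 : nat)]/= subr0 ger0_norm ?ler0n // ler_nat ltnW.
- apply: le_trans cost_i; rewrite lee_fin mul1r mulrC.
  exact/log2_le_ternary_search_cost/trunc_log_bounds.
Qed.
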